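(* A word $w$ over $\{a,b\}$ is good if and only if $w=\epsilon$ or there exist integers $n,e,i,f$ with $e\ge0$, $0\le i,f\le n$, and ($e=0 \Rightarrow n=\max(i,f)$), such that $w=a^i(ba^n)^eba^f$ or $w=b^i(ab^n)^eab^f$.
   Context: Let $E$ be the morphism exchanging $a$ and $b$, and $\tilde w$ the mirror image (reversal) of $w$. A word $w$ over $\{a,b\}$ is bad if one of $w,\tilde w,E(w),E(\tilde w)$ has a factor of the form $a^kb^h$ with $k,h\ge 2$, or of the form $a^kba^lb^m$ with $k>l\ge 1$, $m\ge1$; $w$ is good if it is not bad. $\epsilon$ denotes the empty word. *)

From HB Require Import structures.
From mathcomp Require Import all_boot.
Set Implicit Arguments. Unset Strict Implicit. Unset Printing Implicit Defensive.

Inductive letter := la | lb.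

Definition letter_eqb (x y : letter) : bool :=
  match x, y with la, la | lb, lb => true | _, _ => false end.
Lemma letter_eqP : Equality.axiom letter_eqb.
Proof. by case; case; constructor. Qed.
HB.instance Definition _ := hasDecEq.Build letter letter_eqP.

Definition word := seq letter.

Definition swap (x : letter) : letter := if x is la then lb else la.
Definition E (w : word) : word := map swap w.

Definition pw (x : letter) (n : nat) : word := nseq n x.

Definition has_bad_factor (v : word) : Prop :=
  (exists k h, 2 <= k /\ 2 <= h /\ infix (pw la k ++ pw lb h) v) \/
  (exists k l m, l < k /\ 1 <= l /\ 1 <= m /\
      infix (pw la k ++ [:: lb] ++ pw la l ++ pw lb m) v).

Definition bad (w : word) : Prop :=
  has_bad_factor w \/ has_bad_factor (rev w) \/
  has_bad_factor (E w) \/ has_bad_factor (E (rev w)).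

Definition good (w : word) : Prop := ~ bad w.

From mathcomp Require Import all_boot zify.
Set Implicit Arguments. Unset Strict Implicit. Unset Printing Implicit Defensive.

(* Call a word canonical for the letter x (with y the other letter) if it is
   x^i (y x^n)^e y x^f with i, f <= n and n = max(i, f) when e = 0.
   Since E exchanges the patterns for a with those for b, a word is bad iff a
   bad pattern for one of the two letters occurs in it or in its mirror image.
   Canonical words are closed under mirror image and under taking suffixes, and
   no bad pattern is a prefix of a canonical word; hence they are good.
   Conversely, prepending a letter to a canonical word gives either a canonical
   word or a word starting with a bad pattern or with the mirror image of one;
   as goodness passes to factors, induction on the word shows that every
   nonempty good word is canonical. *)

Lemma swapK : involutive swap. Proof. by case. Qed.

Lemma swap_neq x : swap x != x. Proof. by case: x. Qed.

Lemma letter_cases x z : z = x \/ z = swap x.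
Proof. by case: x; case: z; auto. Qed.

Lemma neq_swap x y : x != y -> y = swap x.
Proof. by case: x; case: y. Qed.

Lemma EK : involutive E. Proof. exact: mapK swapK. Qed.

Lemma swap_notin_pw x n : swap x \notin pw x n.
Proof. by rewrite mem_nseq (negbTE (swap_neq x)) andbF. Qed.

Lemma pw_swap_inj x k l s t :
  pw x k ++ swap x :: s = pw x l ++ swap x :: t -> k = l /\ s = t.
Proof.
elim: k l => [|k IH] [|l] /=; first by case.
- by case=> /eqP; rewrite (negbTE (swap_neq x)).
- by case=> /eqP; rewrite eq_sym (negbTE (swap_neq x)).
- by case=> /IH [-> ->].
Qed.

Lemma flatten_nseq_shift (T : Type) (s t : seq T) e :
  s ++ flatten (nseq e (t ++ s)) = flatten (nseq e (s ++ t)) ++ s.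
Proof. by elim: e => [|e IH] /=; rewrite ?cats0 // -!catA IH. Qed.

Lemma rev_flatten_nseq (T : Type) (s : seq T) e :
  rev (flatten (nseq e s)) = flatten (nseq e (rev s)).
Proof. by rewrite rev_flatten map_nseq rev_nseq. Qed.

Definition bad_pattern (x : letter) (p : word) : Prop :=
  (exists k h, 2 <= k /\ 2 <= h /\ p = pw x k ++ pw (swap x) h) \/
  (exists k l m, l < k /\ 1 <= l /\ 1 <= m /\
      p = pw x k ++ [:: swap x] ++ pw x l ++ pw (swap x) m).

Definition bad_factor (x : letter) (v : word) : Prop :=
  exists2 p, bad_pattern x p & infix p v.

Lemma bad_pattern_nil x : ~ bad_pattern x [::].
Proof. by case=> [[[|[|k]] [h [hk [_ e]]]] | [[|[|k]] [l [m [hk [_ [_ e]]]]]]]. Qed.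

Lemma has_bad_factorE v : has_bad_factor v <-> bad_factor la v.
Proof.
split.
  case=> [[k [h [hk [hh pv]]]] | [k [l [m [lk [hl [hm pv]]]]]]].
    by exists (pw la k ++ pw lb h) => //; left; exists k, h.
  by exists (pw la k ++ [:: lb] ++ pw la l ++ pw lb m) => //; right; exists k, l, m.
case=> p [[k [h [hk [hh ->]]]] | [k [l [m [lk [hl [hm ->]]]]]]] pv.
  by left; exists k, h.
by right; exists k, l, m.
Qed.

Lemma bad_pattern_E x p : bad_pattern x p -> bad_pattern (swap x) (E p).
Proof.
case=> [[k [h [hk [hh ->]]]] | [k [l [m [lk [hl [hm ->]]]]]]].
  by left; exists k, h; rewrite /E !map_cat !map_nseq.
by right; exists k, l, m; rewrite /E !map_cat !map_nseq.
Qed.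

Lemma bad_factor_E x v : bad_factor x v -> bad_factor (swap x) (E v).
Proof.
case=> p /bad_pattern_E bp /infixP [s [s' ->]]; exists (E p) => //.
by apply/infixP; exists (E s), (E s'); rewrite /E !map_cat.
Qed.

Lemma badP v : bad v <-> exists x, bad_factor x v \/ bad_factor x (rev v).
Proof.
rewrite /bad !has_bad_factorE; split.
  case=> [b|[b|[b|b]]];
    [exists la; left | exists la; right | exists lb; left | exists lb; right] => //;
    by have := bad_factor_E b; rewrite EK.
case=> [[] [b|b]]; [left | right; left | right; right; left | right; right; right] => //;
  exact: bad_factor_E b.
Qed.

Lemma bad_infix u v : infix u v -> bad u -> bad v.
Proof.
move=> uv /badP [x [[p bp pu] | [p bp pu]]]; apply/badP; exists x; [left | right].
  by exists p => //; apply: infix_trans pu uv.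
by exists p => //; apply: infix_trans pu _; rewrite infix_rev.
Qed.

Lemma bad_pattern_cat x p t : bad_pattern x p -> bad (p ++ t).
Proof. by move=> bp; apply/badP; exists x; left; exists p => //; apply: prefix_infix. Qed.

Lemma bad_pattern_rev_cat x p t : bad_pattern x p -> bad (rev p ++ t).
Proof.
move=> bp; apply: (bad_infix (prefix_infix _ t)).
by apply/badP; exists x; right; exists p; rewrite ?revK ?infix_refl.
Qed.

Lemma bad_long_runs x y k h t :
  x != y -> 1 < k -> 1 < h -> bad (pw x k ++ pw y h ++ t).
Proof.
move=> /neq_swap -> hk hh; rewrite catA.
by apply: (bad_pattern_cat (x := x)); left; exists k, h.
Qed.

Lemma bad_run_decrease x y k l m t : x != y -> l < k -> 0 < l -> 0 < m ->
  bad (pw x k ++ y :: pw x l ++ pw y m ++ t).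
Proof.
move=> /neq_swap -> lk hl hm.
have -> : pw x k ++ swap x :: pw x l ++ pw (swap x) m ++ t =
    (pw x k ++ [:: swap x] ++ pw x l ++ pw (swap x) m) ++ t by rewrite -!catA.
by apply: (bad_pattern_cat (x := x)); right; exists k, l, m.
Qed.

Lemma bad_run_increase x y k l t : x != y -> l < k -> 0 < l ->
  bad (y :: pw x l ++ y :: pw x k ++ t).
Proof.
move=> /neq_swap -> lk hl.
have -> : swap x :: pw x l ++ swap x :: pw x k ++ t =
    rev (pw x k ++ [:: swap x] ++ pw x l ++ pw (swap x) 1) ++ t.
  by rewrite !rev_cat !rev_nseq /= -!catA.
by apply: (bad_pattern_rev_cat (x := x)); right; exists k, l, 1.
Qed.

Lemma good_nil : good [::].
Proof.
move=> /badP [x bx]; have {bx} [p bp] : bad_factor x [::] by case: bx.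
by rewrite infixs0 => /eqP pnil; move: bp; rewrite pnil; apply: bad_pattern_nil.
Qed.

Definition admissible (n e i f : nat) : Prop :=
  i <= n /\ f <= n /\ (e = 0 -> n = maxn i f).

Local Ltac lia_adm := unfold admissible in *; lia.

Definition canon_word (x : letter) (n e i f : nat) : word :=
  pw x i ++ flatten (nseq e (swap x :: pw x n)) ++ swap x :: pw x f.

Definition canonical (x : letter) (w : word) : Prop :=
  exists n e i f, admissible n e i f /\ w = canon_word x n e i f.

Lemma canon_wordS x n e i f :
  canon_word x n e.+1 i f = pw x i ++ swap x :: canon_word x n e n f.
Proof. by rewrite /canon_word /= -!catA. Qed.

Lemma canon_word_pow x e : canon_word x 0 e 0 0 = pw (swap x) e.+1.
Proof. by elim: e => // e IH; rewrite canon_wordS IH. Qed.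

Lemma canon_word_head x n e i f :
  exists s, canon_word x n e i f = pw x i ++ swap x :: s.
Proof. by case: e => [|e]; [exists (pw x f) | rewrite canon_wordS; eexists]. Qed.

Lemma canon_wordSE x n e i f :
  exists s, canon_word x n e.+1 i f = pw x i ++ swap x :: pw x n ++ swap x :: s.
Proof. by rewrite canon_wordS; have [s ->] := canon_word_head x n e n f; exists s. Qed.

Lemma canon_word_second_run x n e i f : admissible n e i f -> i < n ->
  exists s, canon_word x n e i f = pw x i ++ swap x :: pw x n ++ s.
Proof.
case: e => [|e] adm lt_in.
  have fn : f = n by lia_adm.
  by exists [::]; rewrite cats0 fn.
by have [s ->] := canon_wordSE x n e i f; exists (swap x :: s).
Qed.

Lemma canonical_rev x w : canonical x w -> canonical x (rev w).
Proof.
move=> [n [e [i [f [adm ->]]]]]; exists n, e, f, i; split; first by lia_adm.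
rewrite /canon_word !rev_cat rev_flatten_nseq !rev_cons !rev_nseq -!cats1 -!catA.
by rewrite (catA [:: swap x]) flatten_nseq_shift -catA.
Qed.

Lemma canonical_behead x z v :
  canonical x (z :: v) -> v = [::] \/ exists y, canonical y v.
Proof.
move=> [n [e [i [f [adm]]]]]; case: i adm => [|i] adm.
  case: e adm => [|e] adm; last first.
    rewrite canon_wordS => -[_ ->]; right; exists x, n, e, n, f; split=> //.
    by lia_adm.
  case=> _ ->; case: f adm => [|f] adm; first by left.
  right; exists (swap x), 0, f, 0, 0; split; first by [].
  by rewrite canon_word_pow swapK.
case=> _ ->; right; case: e adm => [|e] adm.
  by exists x, (maxn i f), 0, i, f; split=> //; lia_adm.
by exists x, n, e.+1, i, f; split=> //; lia_adm.
Qed.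

Lemma canonical_suffix x s t :
  canonical x (s ++ t) -> t = [::] \/ exists y, canonical y t.
Proof.
elim: s x => [|z s IH] x cw; first by right; exists x.
case: (canonical_behead cw) => [|[y /IH //]].
by case: s {IH cw} => [->|//]; left.
Qed.

Lemma canonical_run_le x k l r :
  canonical x (pw x k ++ swap x :: pw x l ++ swap x :: r) -> k <= l.
Proof.
move=> [n [e [i [f [adm]]]]]; case: e adm => [|e] adm.
  move=> /pw_swap_inj [_ ew].
  by have := swap_notin_pw x f; rewrite -ew mem_cat inE eqxx orbT.
have [s ->] := canon_wordSE x n e i f.
by move=> /pw_swap_inj [-> /pw_swap_inj [-> _]]; case: adm.
Qed.

Lemma canonical_swap_run x k s : canonical x (pw (swap x) k ++ x :: s) -> k <= 1.
Proof.
case: k => [|[|k]] // [n [e [i [f [adm]]]]].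
case: n adm => [|n] adm.
  have [-> ->] : i = 0 /\ f = 0 by lia_adm.
  rewrite canon_word_pow => ew.
  have : x \in pw (swap x) e.+1 by rewrite -ew !inE mem_cat inE eqxx !orbT.
  by rewrite mem_nseq eq_sym (negbTE (swap_neq x)) andbF.
case: i adm => [|i] adm; last by case=> /eqP; rewrite (negbTE (swap_neq x)).
have [t ->] := canon_word_second_run x adm (ltn0Sn n).
by case=> /eqP; rewrite (negbTE (swap_neq x)).
Qed.

Lemma canonical_no_bad_prefix x y p t : canonical x (p ++ t) -> ~ bad_pattern y p.
Proof.
move=> + bp; case: (letter_cases x y) bp => ->
  [[k [h [hk [hh ->]]]] | [k [l [m [lk [hl [hm ->]]]]]]].
- case: h hh => [|[|h]] // _; rewrite -catA => cw.
  by have := @canonical_run_le x k 0 (pw (swap x) h ++ t) cw; lia.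
- case: m hm => [|m] // _; rewrite -!catA => cw.
  by have := @canonical_run_le x k l (pw (swap x) m ++ t) cw; lia.
- case: h hh => [|h] // _; rewrite swapK -catA => cw.
  by have := @canonical_swap_run x k (pw x h ++ t) cw; lia.
- rewrite swapK -!catA => cw.
  by have := @canonical_swap_run x k (pw (swap x) l ++ pw x m ++ t) cw; lia.
Qed.

Lemma canonical_no_bad_factor x y w : canonical x w -> ~ bad_factor y w.
Proof.
move=> cw [p bp /infixP [s [s' ew]]]; rewrite ew in cw.
case: (canonical_suffix cw) => [|[z /canonical_no_bad_prefix nb]]; last exact: nb bp.
by case: p bp {ew cw} => [/bad_pattern_nil|].
Qed.

Lemma canonical_good x w : canonical x w -> good w.
Proof.
move=> cw /badP [y [bw | bw]]; first exact: canonical_no_bad_factor cw bw.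
exact: canonical_no_bad_factor (canonical_rev cw) bw.
Qed.

Lemma canonical_swap_period1 x e f :
  admissible 1 e 0 f -> canonical (swap x) (canon_word x 1 e 0 f).
Proof.
have shift e' : flatten (nseq e' [:: swap x; x]) ++ [:: swap x] =
    swap x :: flatten (nseq e' [:: x; swap x]).
  exact/esym/(flatten_nseq_shift [:: swap x] [:: x]).
case: f => [|[|f]] adm; last by lia_adm.
  case: e adm => [|e] adm; first by lia_adm.
  exists 1, e, 1, 1; split; first by lia_adm.
  have rot : x :: swap x :: flatten (nseq e [:: x; swap x]) =
      flatten (nseq e [:: x; swap x]) ++ [:: x; swap x].
    exact: (flatten_nseq_shift [:: x; swap x] [::]).
  by rewrite /canon_word swapK /= shift rot.
exists 1, e, 1, 0; split; first by lia_adm.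
by rewrite /canon_word swapK /= -[[:: swap x; x]]/([:: swap x] ++ [:: x]) catA shift.
Qed.

Lemma canonical_cons_same x n e i f : admissible n e i f ->
  (exists y, canonical y (x :: canon_word x n e i f)) \/
  bad (x :: canon_word x n e i f).
Proof.
move=> adm; case: (ltnP i n) => [lt_in | le_ni].
  by left; exists x, n, e, i.+1, f; split=> //; lia_adm.
have {le_ni} ein : i = n by lia_adm.
rewrite {}ein in adm *; case: e adm => [|e] adm.
  by left; exists x, n.+1, 0, n.+1, f; split=> //; lia_adm.
case: n adm => [|n] adm.
  have -> : f = 0 by lia_adm.
  left; exists (swap x), e.+2, 0, 0, e.+2; split; first by lia_adm.
  by rewrite canon_word_pow /canon_word /= swapK.
right; have [s ->] := canon_wordSE x n.+1 e n.+1 f.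
by apply: (@bad_run_decrease x (swap x) n.+2 n.+1 1); rewrite // eq_sym swap_neq.
Qed.

Lemma canonical_cons_other x n e i f : admissible n e i f ->
  (exists y, canonical y (swap x :: canon_word x n e i f)) \/
  bad (swap x :: canon_word x n e i f).
Proof.
case: i => [|i] adm.
  case: n adm => [|[|n]] adm.
  - have -> : f = 0 by lia_adm.
    left; exists x, 0, e.+1, 0, 0; split; first by lia_adm.
    by rewrite !canon_word_pow.
  (* (y x)^e y x^f is also y-canonical: we are back to prepending y to a y-canonical word. *)
  - have [n' [e' [i' [f' [adm' ->]]]]] := canonical_swap_period1 x adm.
    exact: canonical_cons_same adm'.
  - right; have [s ->] := canon_word_second_run x adm (ltn0Sn n.+1).
    exact: (@bad_long_runs (swap x) x 2 n.+2 s (swap_neq x)).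
case: (ltnP i.+1 n) => [lt_in | le_ni].
  right; have [s ->] := canon_word_second_run x adm lt_in.
  by apply: (@bad_run_increase x (swap x)); rewrite // eq_sym swap_neq.
have -> : n = i.+1 by lia_adm.
left; exists x, i.+1, e.+1, 0, f; split; last by rewrite canon_wordS.
by lia_adm.
Qed.

Lemma canonical_cons x z w :
  canonical x w -> (exists y, canonical y (z :: w)) \/ bad (z :: w).
Proof.
move=> [n [e [i [f [adm ->]]]]].
by case: (letter_cases x z) => ->; [apply: canonical_cons_same | apply: canonical_cons_other].
Qed.

Lemma good_canonical w : good w -> w = [::] \/ exists x, canonical x w.
Proof.
elim: w => [|z w IH] gzw; [by left | right].
have [->|[x cw]] := IH (fun bw => gzw (bad_infix (infix_cons w z) bw)).
  exists (swap z), 0, 0, 0, 0; split; first by lia_adm.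
  by rewrite /canon_word /= swapK.
by case: (canonical_cons z cw).
Qed.

Theorem lemma10 (w : word) :
  good w <->
  w = [::] \/
  exists n e i f : nat,
    i <= n /\ f <= n /\ (e = 0 -> n = maxn i f) /\
    (w = pw la i ++ flatten (nseq e (lb :: pw la n)) ++ lb :: pw la f \/
     w = pw lb i ++ flatten (nseq e (la :: pw lb n)) ++ la :: pw lb f).
Proof.
split.
  move/good_canonical => [-> | [[] [n [e [i [f [[le_in [le_fn adm0]] ew]]]]]]];
    first by left.
    by right; exists n, e, i, f; do 3!split=> //; left.
  by right; exists n, e, i, f; do 3!split=> //; right.
case=> [-> | [n [e [i [f [le_in [le_fn [adm0 ew]]]]]]]]; first exact: good_nil.
have adm : admissible n e i f by [].
by case: ew => ew; [apply: (@canonical_good la) | apply: (@canonical_good lb)];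
  exists n, e, i, f.
Qed.
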